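(* Let $\mathcal{A}=\mathbb{C}\setminus(-\infty,0]$ and let $H$ be the principal branch on $\mathcal{A}$ given by $H(z)=\ln\frac{z(1+z)}{1+z^2}\big/\ln\frac{1+z^2}{1+z}$ for $z\ne1$ and $H(1)=1$ (principal logarithm). For $z=re^{i\theta}\in\mathcal{A}$, the limit $\lim_{z\to0}\frac1{zH(z)}=0$ holds uniformly for $\theta\in[-\frac\pi2,\frac\pi2]$, and the limit $\lim_{z\to\infty}\frac1{z^2H(z)}=0$ holds uniformly for $\theta\in(-\pi,\pi)$.
   Context: $H$ is the holomorphic extension to $\mathcal{A}$ of $H(x)=\frac{\ln x}{\ln(x^2+1)-\ln(x+1)}-1$, $x\in(0,\infty)$. *)

From Stdlib Require Import Reals.
From Coquelicot Require Import Coquelicot.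
Open Scope R_scope.

(* Principal argument of a complex number, with values in (-PI, PI]:
   Arg (x + iy) = PI on the negative real axis, and 2 atan (y / (|z| + x))
   elsewhere (the standard half-angle formula for the principal argument).
   Arg 0 = 0 (irrelevant convention). *)
Definition Carg (z : C) : R :=
  if Req_EM_T (Im z) 0 then (if Rlt_dec (Re z) 0 then PI else 0)
  else 2 * atan (Im z / (Cmod z + Re z)).

Definition Clog (z : C) : C := (ln (Cmod z), Carg z).

Definition H (z : C) : C :=
  if Ceq_dec z 1 then 1%C
  else (Clog (z * (1 + z) / (1 + z * z)) / Clog ((1 + z * z) / (1 + z)))%C.

Definition polarC (r theta : R) : C := (r * cos theta, r * sin theta).

(* Write H = Log w1 / Log w2 with w1 = z(1+z)/(1+z^2) and w2 = (1+z^2)/(1+z).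
   As z -> 0, |w1| <= 2|z|, so |Log w1| >= -ln (2|z|) -> oo, while w2 - 1 = O(|z|)
   and Log is Lipschitz near 1; hence |1/(zH)| <= 12 / -ln (2|z|).
   As z -> oo, w1 - 1 = (z-1)/(1+z^2) has exact order 1/|z| and |Log w| is
   comparable to |w - 1| near 1, so |Log w1| >= 1/(12|z|); also |Log w2| <= ln (2|z|) + PI.
   Hence |1/(z^2 H)| <= 12 (ln (2|z|) + PI) / |z|.  Neither estimate depends on the
   argument of z, so both limits are uniform in theta. *)

From Stdlib Require Import Reals Lra Psatz.
From Coquelicot Require Import Coquelicot.
Open Scope R_scope.

Lemma ln_le_sub_1 x : 0 < x -> ln x <= x - 1.
Proof.
  intros Hx. rewrite <- (ln_exp (x - 1)). apply ln_le; [exact Hx|].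
  pose proof (exp_ineq1_le (x - 1)). lra.
Qed.

Lemma one_sub_inv_le_ln x : 0 < x -> 1 - / x <= ln x.
Proof.
  intros Hx. pose proof (ln_le_sub_1 (/ x) (Rinv_0_lt_compat _ Hx)) as h.
  rewrite ln_Rinv in h by exact Hx. lra.
Qed.

Lemma Rabs_sub_1_le_ln x M : 0 < x <= M -> 1 <= M -> Rabs (x - 1) <= M * Rabs (ln x).
Proof.
  intros [Hx HM] HM1. pose proof (ln_le_sub_1 x Hx). pose proof (one_sub_inv_le_ln x Hx).
  assert (Hinv : x * / x = 1) by (field; lra).
  destruct (Rle_lt_dec 1 x) as [H1|H1].
  - assert (0 <= ln x) by (rewrite <- ln_1; apply ln_le; lra).
    rewrite !Rabs_right by lra. nra.
  - assert (ln x < 0) by (rewrite <- ln_1; apply ln_increasing; lra).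
    rewrite !Rabs_left by lra. nra.
Qed.

Lemma ln_le_2_sqrt x : 0 < x -> ln x <= 2 * sqrt x.
Proof.
  intros Hx. assert (Hs : 0 < sqrt x) by (apply sqrt_lt_R0; exact Hx).
  rewrite <- (sqrt_sqrt x) at 1 by lra. rewrite ln_mult by exact Hs.
  pose proof (ln_le_sub_1 _ Hs). lra.
Qed.

Lemma atan_mean_value u : exists c, Rabs c <= Rabs u /\ atan u = u / (1 + c ^ 2).
Proof.
  assert (Hder : forall c, derivable_pt_lim atan c (/ (1 + c ^ 2)))
    by (intros; apply derivable_pt_lim_atan).
  destruct (Rtotal_order u 0) as [Hu|[Hu|Hu]].
  - destruct (MVT_cor2 atan _ u 0 Hu (fun c _ => Hder c)) as [c [Hc [Hc1 Hc2]]].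
    exists c. rewrite atan_0 in Hc. split; [rewrite !Rabs_left by lra; lra|].
    unfold Rdiv. lra.
  - subst u. exists 0. rewrite atan_0. split; [lra|]. unfold Rdiv. ring.
  - destruct (MVT_cor2 atan _ 0 u Hu (fun c _ => Hder c)) as [c [Hc [Hc1 Hc2]]].
    exists c. rewrite atan_0 in Hc. split; [rewrite !Rabs_right by lra; lra|].
    unfold Rdiv. lra.
Qed.

Lemma Rabs_atan_le u : Rabs (atan u) <= Rabs u.
Proof.
  destruct (atan_mean_value u) as [c [_ ->]].
  unfold Rdiv. rewrite Rabs_mult, Rabs_inv, (Rabs_right (1 + c ^ 2)) by nra.
  assert (/ (1 + c ^ 2) <= 1) by (rewrite <- Rinv_1; apply Rinv_le_contravar; nra).
  assert (0 < / (1 + c ^ 2)) by (apply Rinv_0_lt_compat; nra).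
  pose proof (Rabs_pos u). nra.
Qed.

Lemma Rabs_atan_ge u : Rabs u <= 1 -> Rabs u / 2 <= Rabs (atan u).
Proof.
  intros Hu. destruct (atan_mean_value u) as [c [Hc ->]].
  unfold Rdiv. rewrite Rabs_mult, Rabs_inv, (Rabs_right (1 + c ^ 2)) by nra.
  assert (c ^ 2 <= 1) by (rewrite <- (pow2_abs c); pose proof (Rabs_pos c); nra).
  assert (/ 2 <= / (1 + c ^ 2)) by (apply Rinv_le_contravar; nra).
  pose proof (Rabs_pos u). nra.
Qed.

Lemma Rabs_Im_le_Cmod z : Rabs (Im z) <= Cmod z.
Proof.
  pose proof (Rmax_Cmod z). pose proof (Rmax_r (Rabs (fst z)) (Rabs (snd z))).
  unfold Im. lra.
Qed.

Lemma Cmod_le_Rabs_Re_Im z : Cmod z <= Rabs (Re z) + Rabs (Im z).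
Proof.
  pose proof (Rabs_pos (Re z)). pose proof (Rabs_pos (Im z)).
  apply Rsqr_incr_0_var; [|lra]. rewrite !Rsqr_pow2, Cmod2_alt.
  rewrite <- (pow2_abs (Re z)), <- (pow2_abs (Im z)). nra.
Qed.

Lemma Cmod_triangle_rev a b : Rabs (Cmod a - Cmod b) <= Cmod (a - b).
Proof.
  pose proof (Cmod_triangle (a - b) b) as Ha. pose proof (Cmod_triangle (b - a) a) as Hb.
  replace (a - b + b)%C with a in Ha by ring. replace (b - a + a)%C with b in Hb by ring.
  replace (b - a)%C with (- (a - b))%C in Hb by ring. rewrite Cmod_opp in Hb.
  apply Rabs_le. lra.
Qed.

Lemma Cmod_1_add_bounds z : Rabs (1 - Cmod z) <= Cmod (1 + z) <= 1 + Cmod z.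
Proof.
  split.
  - pose proof (Cmod_triangle_rev 1 (- z)) as h. rewrite Cmod_1, Cmod_opp in h.
    replace (1 - - z)%C with (1 + z)%C in h by ring. exact h.
  - pose proof (Cmod_triangle 1 z). rewrite Cmod_1 in *. lra.
Qed.

Lemma Cmod_sub_1_bounds z : Rabs (Cmod z - 1) <= Cmod (z - 1) <= Cmod z + 1.
Proof.
  split.
  - pose proof (Cmod_triangle_rev z 1) as h. rewrite Cmod_1 in h. exact h.
  - pose proof (Cmod_triangle z (- (1))) as h. rewrite Cmod_opp, Cmod_1 in h. exact h.
Qed.

Lemma Cmod_polarC r t : 0 <= r -> Cmod (polarC r t) = r.
Proof.
  intros Hr. unfold polarC, Cmod; simpl.
  replace (r * cos t * (r * cos t * 1) + r * sin t * (r * sin t * 1))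
    with (r * r * ((sin t)² + (cos t)²)) by (unfold Rsqr; ring).
  rewrite sin2_cos2, Rmult_1_r. apply sqrt_square; exact Hr.
Qed.

(* [b = 0] is allowed: Coquelicot's [/ 0] is [0], so the left side is then [0]. *)
Lemma Cmod_inv_mul_div_le (z a b : C) : z <> 0%C -> a <> 0%C ->
  Cmod (/ (z * (a / b))) <= Cmod b / (Cmod z * Cmod a).
Proof.
  intros Hz Ha. pose proof (proj1 (Cmod_gt_0 z) Hz). pose proof (proj1 (Cmod_gt_0 a) Ha).
  destruct (Ceq_dec b 0) as [->|Hb].
  - assert (Hinv0 : Cinv 0 = 0%C)
      by (unfold Cinv; simpl; apply injective_projections; simpl; unfold Rdiv; ring).
    unfold Cdiv. rewrite Hinv0, !Cmult_0_r, Hinv0, Cmod_0.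
    apply Rdiv_le_0_compat; [lra|nra].
  - assert (Hzab : (z * (a / b))%C <> 0%C).
    { apply Cmod_gt_0. rewrite Cmod_mult, Cmod_div by exact Hb.
      pose proof (proj1 (Cmod_gt_0 b) Hb). apply Rmult_lt_0_compat; [lra|].
      apply Rdiv_lt_0_compat; lra. }
    pose proof (proj1 (Cmod_gt_0 b) Hb).
    rewrite Cmod_inv, Cmod_mult, Cmod_div by assumption. right. field. lra.
Qed.

Lemma Rabs_ln_Cmod_le_Cmod_Clog w : Rabs (ln (Cmod w)) <= Cmod (Clog w).
Proof. exact (re_le_Cmod (Clog w)). Qed.

Lemma Rabs_Carg_le_Cmod_Clog w : Rabs (Carg w) <= Cmod (Clog w).
Proof. exact (Rabs_Im_le_Cmod (Clog w)). Qed.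

Lemma Cmod_Clog_le w : Cmod (Clog w) <= Rabs (ln (Cmod w)) + Rabs (Carg w).
Proof. exact (Cmod_le_Rabs_Re_Im (Clog w)). Qed.

Lemma Rabs_Carg_le_PI w : Rabs (Carg w) <= PI.
Proof.
  unfold Carg. pose proof PI_RGT_0.
  destruct Req_EM_T; [destruct Rlt_dec; rewrite ?Rabs_R0, ?Rabs_right; lra|].
  pose proof (atan_bound (Im w / (Cmod w + Re w))). apply Rabs_le. lra.
Qed.

Lemma Carg_Re_pos w : 0 < Re w -> Carg w = 2 * atan (Im w / (Cmod w + Re w)).
Proof.
  intros Hx. unfold Carg. destruct Req_EM_T as [->|]; [|reflexivity].
  destruct Rlt_dec; [lra|]. unfold Rdiv. rewrite Rmult_0_l, atan_0. ring.
Qed.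

Section LogNearOne.

Variable w : C.
Hypothesis near_one : Cmod (w - 1) <= 1 / 2.

Let Rabs_Cmod_sub_1 : Rabs (Cmod w - 1) <= Cmod (w - 1).
Proof. exact (proj1 (Cmod_sub_1_bounds w)). Qed.

Let Rabs_Re_sub_1 : Rabs (Re w - 1) <= Cmod (w - 1).
Proof.
  replace (Re w - 1) with (Re (w - 1)) by (unfold Re; simpl; ring). apply re_le_Cmod.
Qed.

Let Rabs_Im_le : Rabs (Im w) <= Cmod (w - 1).
Proof.
  replace (Im w) with (Im (w - 1)) by (unfold Im; simpl; ring). apply Rabs_Im_le_Cmod.
Qed.

Let Re_ge : 1 / 2 <= Re w.
Proof. apply Rabs_le_between in Rabs_Re_sub_1. lra. Qed.

Let Cmod_between : 1 / 2 <= Cmod w <= 3 / 2.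
Proof. apply Rabs_le_between in Rabs_Cmod_sub_1. lra. Qed.

Let Re_le_Cmod : Re w <= Cmod w.
Proof. pose proof (re_le_Cmod w) as h. apply Rabs_le_between in h. lra. Qed.

Let Rabs_Carg_eq : Rabs (Carg w) = 2 * Rabs (atan (Im w / (Cmod w + Re w))).
Proof. rewrite Carg_Re_pos by lra. rewrite Rabs_mult, Rabs_right by lra. reflexivity. Qed.

Let Rabs_atan_arg : Rabs (Im w / (Cmod w + Re w)) = Rabs (Im w) / (Cmod w + Re w).
Proof.
  unfold Rdiv. rewrite Rabs_mult, Rabs_inv, (Rabs_right (Cmod w + Re w)) by lra.
  reflexivity.
Qed.

Lemma Cmod_Clog_near_one_le : Cmod (Clog w) <= 4 * Cmod (w - 1).
Proof.
  assert (Hln : Rabs (ln (Cmod w)) <= 2 * Cmod (w - 1)).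
  { pose proof (ln_le_sub_1 (Cmod w)) as Hu. pose proof (one_sub_inv_le_ln (Cmod w)) as Hl.
    assert (Hinv : Cmod w * / Cmod w = 1) by (field; lra).
    assert (/ Cmod w <= 2)
      by (replace 2 with (/ (1 / 2)) by field; apply Rinv_le_contravar; lra).
    apply Rabs_le_between in Rabs_Cmod_sub_1. apply Rabs_le. split; [|lra].
    assert (1 - / Cmod w <= ln (Cmod w)) by (apply Hl; lra). nra. }
  assert (Harg : Rabs (Carg w) <= 2 * Cmod (w - 1)).
  { rewrite Rabs_Carg_eq. pose proof (Rabs_atan_le (Im w / (Cmod w + Re w))) as Hat.
    rewrite Rabs_atan_arg in Hat.
    assert (Rabs (Im w) / (Cmod w + Re w) <= Rabs (Im w))
      by (apply Rle_div_l; [lra|]; pose proof (Rabs_pos (Im w)); nra).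
    lra. }
  pose proof (Cmod_Clog_le w). lra.
Qed.

Lemma Cmod_sub_1_le_Clog : Cmod (w - 1) <= 6 * Cmod (Clog w).
Proof.
  set (L := Cmod (Clog w)).
  assert (Hrho : Rabs (Cmod w - 1) <= 3 / 2 * L).
  { apply Rle_trans with (3 / 2 * Rabs (ln (Cmod w))).
    - apply Rabs_sub_1_le_ln; lra.
    - pose proof (Rabs_ln_Cmod_le_Cmod_Clog w) as Hln. fold L in Hln. lra. }
  assert (Hy : Rabs (Im w) <= 3 * L).
  { pose proof (Rabs_Carg_le_Cmod_Clog w) as HL. fold L in HL. rewrite Rabs_Carg_eq in HL.
    assert (Hr : Rabs (Im w / (Cmod w + Re w)) <= 1).
    { rewrite Rabs_atan_arg. apply Rle_div_l; lra. }
    pose proof (Rabs_atan_ge _ Hr) as Hat. rewrite Rabs_atan_arg in Hat.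
    assert (Rabs (Im w) / 3 <= Rabs (Im w) / (Cmod w + Re w)).
    { unfold Rdiv. apply Rmult_le_compat_l; [apply Rabs_pos|].
      apply Rinv_le_contravar; lra. }
    lra. }
  (* [Cmod w - Re w = (Im w)^2 / (Cmod w + Re w)] is quadratically small. *)
  assert (Hd : Cmod w - Re w <= Rabs (Im w) / 2).
  { pose proof (Cmod2_alt w) as Hsq. rewrite <- (pow2_abs (Im w)) in Hsq.
    pose proof (Rabs_pos (Im w)). nra. }
  pose proof (Cmod_le_Rabs_Re_Im (w - 1)) as Hw.
  replace (Re (w - 1)) with (Re w - 1) in Hw by (unfold Re; simpl; ring).
  replace (Im (w - 1)) with (Im w) in Hw by (unfold Im; simpl; ring).
  pose proof (Rabs_triang (Re w - Cmod w) (Cmod w - 1)) as Ht.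
  replace (Re w - Cmod w + (Cmod w - 1)) with (Re w - 1) in Ht by ring.
  rewrite (Rabs_left1 (Re w - Cmod w)) in Ht by lra. lra.
Qed.

End LogNearOne.

Definition Hnum (z : C) : C := (z * (1 + z) / (1 + z * z))%C.
Definition Hden (z : C) : C := ((1 + z * z) / (1 + z))%C.

Lemma H_eq (z : C) : z <> 1%C -> H z = (Clog (Hnum z) / Clog (Hden z))%C.
Proof. intros Hz. unfold H. destruct Ceq_dec; [contradiction|reflexivity]. Qed.

Lemma Hnum_sub_1 (z : C) :
  (1 + z * z)%C <> 0%C -> (Hnum z - 1 = (z - 1) / (1 + z * z))%C.
Proof. intros Hd. unfold Hnum. field. exact Hd. Qed.

Lemma Hden_sub_1 (z : C) : (1 + z)%C <> 0%C -> (Hden z - 1 = z * (z - 1) / (1 + z))%C.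
Proof. intros Hd. unfold Hden. field. exact Hd. Qed.

Section SmallModulus.

Variable z : C.
Hypothesis z_small : 0 < Cmod z <= 1 / 6.

Let one_add_ge : 1 - Cmod z <= Cmod (1 + z).
Proof. pose proof (Cmod_1_add_bounds z) as [h _]. pose proof (Rle_abs (1 - Cmod z)). lra. Qed.

Let one_add_sqr_ge : 1 - Cmod z * Cmod z <= Cmod (1 + z * z).
Proof.
  pose proof (Cmod_1_add_bounds (z * z)) as [h _]. rewrite Cmod_mult in h.
  pose proof (Rle_abs (1 - Cmod z * Cmod z)). lra.
Qed.

Let one_add_neq0 : (1 + z)%C <> 0%C.
Proof. apply Cmod_gt_0. lra. Qed.

Let one_add_sqr_neq0 : (1 + z * z)%C <> 0%C.
Proof. apply Cmod_gt_0. nra. Qed.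

Lemma Cmod_Hnum_small : 0 < Cmod (Hnum z) <= 2 * Cmod z.
Proof.
  pose proof (proj2 (Cmod_1_add_bounds z)).
  unfold Hnum. rewrite Cmod_div, Cmod_mult by exact one_add_sqr_neq0.
  split; [apply Rdiv_lt_0_compat; nra|]. apply Rle_div_l; nra.
Qed.

Lemma Cmod_Hden_sub_1_small : Cmod (Hden z - 1) <= 3 * Cmod z.
Proof.
  pose proof (proj2 (Cmod_sub_1_bounds z)).
  rewrite Hden_sub_1, Cmod_div, Cmod_mult by assumption.
  apply Rle_div_l; nra.
Qed.

Lemma Cmod_inv_mul_H_small : Cmod (/ (z * H z)) <= 12 / - ln (2 * Cmod z).
Proof.
  assert (Hz0 : z <> 0%C) by (apply Cmod_gt_0; lra).
  assert (Hz1 : z <> 1%C)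
    by (intros e; pose proof z_small as h; rewrite e, Cmod_1 in h; lra).
  pose proof Cmod_Hnum_small as Hnum_bound.
  assert (Hnum0 : Hnum z <> 0%C) by (apply Cmod_gt_0; lra).
  assert (Hln : ln (2 * Cmod z) < 0) by (rewrite <- ln_1; apply ln_increasing; lra).
  assert (Hnum_log : - ln (2 * Cmod z) <= Cmod (Clog (Hnum z))).
  { pose proof (Rabs_ln_Cmod_le_Cmod_Clog (Hnum z)) as Hre.
    assert (ln (Cmod (Hnum z)) <= ln (2 * Cmod z)) by (apply ln_le; lra).
    rewrite Rabs_left in Hre by lra. lra. }
  assert (Hden_log : Cmod (Clog (Hden z)) <= 12 * Cmod z).
  { pose proof Cmod_Hden_sub_1_small.
    pose proof (Cmod_Clog_near_one_le (Hden z) ltac:(lra)). lra. }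
  assert (Hlog0 : Clog (Hnum z) <> 0%C) by (apply Cmod_gt_0; lra).
  rewrite H_eq by exact Hz1.
  eapply Rle_trans; [apply Cmod_inv_mul_div_le; assumption|].
  assert (0 < 12 / - ln (2 * Cmod z)) by (apply Rdiv_lt_0_compat; lra).
  apply Rle_div_l; [nra|].
  apply Rle_trans with (12 / - ln (2 * Cmod z) * (Cmod z * - ln (2 * Cmod z))).
  - replace (12 / - ln (2 * Cmod z) * (Cmod z * - ln (2 * Cmod z)))
      with (12 * Cmod z) by (field; lra). exact Hden_log.
  - apply Rmult_le_compat_l; [lra|]. apply Rmult_le_compat_l; lra.
Qed.

End SmallModulus.

Section LargeModulus.

Variable z : C.
Hypothesis z_large : 3 <= Cmod z.

Let one_add_bounds : Cmod z - 1 <= Cmod (1 + z) <= 1 + Cmod z.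
Proof.
  pose proof (Cmod_1_add_bounds z) as [h1 h2]. rewrite Rabs_minus_sym in h1.
  pose proof (Rle_abs (Cmod z - 1)). lra.
Qed.

Let one_add_sqr_bounds :
  Cmod z * Cmod z - 1 <= Cmod (1 + z * z) <= 1 + Cmod z * Cmod z.
Proof.
  pose proof (Cmod_1_add_bounds (z * z)) as [h1 h2]. rewrite Cmod_mult in h1, h2.
  rewrite Rabs_minus_sym in h1. pose proof (Rle_abs (Cmod z * Cmod z - 1)). lra.
Qed.

Let sub_1_bounds : Cmod z - 1 <= Cmod (z - 1) <= Cmod z + 1.
Proof.
  pose proof (Cmod_sub_1_bounds z) as [h1 h2]. pose proof (Rle_abs (Cmod z - 1)). lra.
Qed.

Let one_add_neq0 : (1 + z)%C <> 0%C.
Proof. apply Cmod_gt_0. lra. Qed.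

Let one_add_sqr_neq0 : (1 + z * z)%C <> 0%C.
Proof. apply Cmod_gt_0. nra. Qed.

Lemma Cmod_Hnum_sub_1_large : 1 / (2 * Cmod z) <= Cmod (Hnum z - 1) <= 1 / 2.
Proof.
  rewrite Hnum_sub_1, Cmod_div by exact one_add_sqr_neq0. split.
  - apply (Rle_div_r (1 / (2 * Cmod z))); [nra|].
    replace (1 / (2 * Cmod z) * Cmod (1 + z * z))
      with (Cmod (1 + z * z) / (2 * Cmod z)) by (field; lra).
    apply Rle_div_l; nra.
  - apply Rle_div_l; nra.
Qed.

Lemma Cmod_Hden_large : 1 <= Cmod (Hden z) <= 2 * Cmod z.
Proof.
  unfold Hden. rewrite Cmod_div by exact one_add_neq0.
  split; [apply Rle_div_r|apply Rle_div_l]; nra.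
Qed.

Lemma Cmod_inv_mul_H_large :
  Cmod (/ (z * z * H z)) <= 12 * (ln (2 * Cmod z) + PI) / Cmod z.
Proof.
  assert (Hz0 : (z * z)%C <> 0%C) by (apply Cmod_gt_0; rewrite Cmod_mult; nra).
  assert (Hz1 : z <> 1%C)
    by (intros e; pose proof z_large as h; rewrite e, Cmod_1 in h; lra).
  pose proof Cmod_Hnum_sub_1_large as [Hlow Hup].
  assert (Hnum_log : 1 / (12 * Cmod z) <= Cmod (Clog (Hnum z))).
  { pose proof (Cmod_sub_1_le_Clog (Hnum z) Hup).
    replace (1 / (12 * Cmod z)) with (1 / (2 * Cmod z) / 6) by (field; lra). lra. }
  assert (Hden_log : Cmod (Clog (Hden z)) <= ln (2 * Cmod z) + PI).
  { pose proof Cmod_Hden_large. pose proof (Cmod_Clog_le (Hden z)).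
    pose proof (Rabs_Carg_le_PI (Hden z)).
    assert (0 <= ln (Cmod (Hden z))) by (rewrite <- ln_1; apply ln_le; lra).
    assert (ln (Cmod (Hden z)) <= ln (2 * Cmod z)) by (apply ln_le; lra).
    rewrite Rabs_right in * by lra. lra. }
  assert (0 < 1 / (12 * Cmod z)) by (apply Rdiv_lt_0_compat; lra).
  assert (Hlog0 : Clog (Hnum z) <> 0%C) by (apply Cmod_gt_0; lra).
  rewrite H_eq by exact Hz1.
  eapply Rle_trans; [apply Cmod_inv_mul_div_le; assumption|].
  assert (0 <= ln (2 * Cmod z)) by (rewrite <- ln_1; apply ln_le; lra).
  set (B := 12 * (ln (2 * Cmod z) + PI) / Cmod z).
  assert (HB : 0 < B) by (pose proof PI_RGT_0; apply Rdiv_lt_0_compat; lra).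
  rewrite Cmod_mult. apply Rle_div_l; [apply Rmult_lt_0_compat; nra|].
  apply Rle_trans with (B * (Cmod z * Cmod z * (1 / (12 * Cmod z)))).
  - replace (B * (Cmod z * Cmod z * (1 / (12 * Cmod z)))) with (ln (2 * Cmod z) + PI)
      by (unfold B; field; lra). exact Hden_log.
  - apply Rmult_le_compat_l; [lra|]. apply Rmult_le_compat_l; nra.
Qed.

End LargeModulus.

Lemma div_neg_ln_vanishes c a eps : 0 < c -> 0 < a -> 0 < eps ->
  exists delta, 0 < delta /\ forall r, 0 < r < delta -> c / - ln (a * r) < eps.
Proof.
  intros Hc Ha He. exists (exp (- (c / eps)) / a). split.
  - apply Rdiv_lt_0_compat; [apply exp_pos|exact Ha].
  - intros r [Hr Hrd]. apply (proj2 (Rlt_div_r _ _ _ Ha)) in Hrd.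
    assert (Hce : eps * (c / eps) = c) by (field; lra).
    assert (Hln : ln (a * r) < - (c / eps)).
    { rewrite <- (ln_exp (- (c / eps))). apply ln_increasing; nra. }
    apply Rlt_div_l; nra.
Qed.

Lemma ln_div_vanishes c eps : 0 < c -> 0 < eps ->
  exists M, 0 < M /\ forall r, M < r -> c * (ln (2 * r) + PI) / r < eps.
Proof.
  intros Hc He. set (K := 7 * c / eps).
  assert (HK : 0 < K) by (unfold K; apply Rdiv_lt_0_compat; lra).
  assert (HcK : eps * K = 7 * c) by (unfold K; field; lra).
  exists (Rmax 1 (K ^ 2)). split; [pose proof (Rmax_l 1 (K ^ 2)); lra|].
  intros r Hr. pose proof (Rmax_l 1 (K ^ 2)). pose proof (Rmax_r 1 (K ^ 2)).
  set (s := sqrt r).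
  assert (Hss : s * s = r) by (apply sqrt_sqrt; lra).
  assert (Hs1 : 1 <= s) by (unfold s; rewrite <- sqrt_1; apply sqrt_le_1_alt; lra).
  assert (Hcs : 7 * c < eps * s) by (assert (K < s) by nra; nra).
  assert (Hlog : ln (2 * r) + PI <= 7 * s).
  { rewrite ln_mult by lra. pose proof (ln_le_sub_1 2 ltac:(lra)).
    pose proof (ln_le_2_sqrt r ltac:(lra)) as Hl. fold s in Hl. pose proof PI_4. lra. }
  assert (c * (ln (2 * r) + PI) <= c * (7 * s)) by (apply Rmult_le_compat_l; lra).
  apply Rlt_div_l; [lra|].
  replace (eps * r) with (eps * s * s) by (rewrite <- Hss; ring). nra.
Qed.

Theorem lemma4p4 :
  (forall eps : R, 0 < eps ->
     exists delta : R, 0 < delta /\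
       forall r theta : R, 0 < r < delta -> - (PI / 2) <= theta <= PI / 2 ->
         Cmod (/ (polarC r theta * H (polarC r theta)))%C < eps) /\
  (forall eps : R, 0 < eps ->
     exists M : R, 0 < M /\
       forall r theta : R, M < r -> - PI < theta < PI ->
         Cmod (/ (polarC r theta * polarC r theta * H (polarC r theta)))%C < eps).
Proof.
  split.
  - intros eps Heps.
    destruct (div_neg_ln_vanishes 12 2 eps) as [delta [Hd Hsmall]]; try lra.
    exists (Rmin (1 / 6) delta). split; [apply Rmin_glb_lt; lra|].
    intros r theta [Hr Hrd] _.
    pose proof (Rmin_l (1 / 6) delta). pose proof (Rmin_r (1 / 6) delta).
    pose proof (Cmod_polarC r theta ltac:(lra)) as Hmod.
    eapply Rle_lt_trans; [apply Cmod_inv_mul_H_small; rewrite Hmod; lra|].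
    rewrite Hmod. apply Hsmall. lra.
  - intros eps Heps.
    destruct (ln_div_vanishes 12 eps) as [M [HM Hlarge]]; try lra.
    exists (Rmax 3 M). split; [pose proof (Rmax_l 3 M); lra|].
    intros r theta Hr _.
    pose proof (Rmax_l 3 M). pose proof (Rmax_r 3 M).
    pose proof (Cmod_polarC r theta ltac:(lra)) as Hmod.
    eapply Rle_lt_trans; [apply Cmod_inv_mul_H_large; rewrite Hmod; lra|].
    rewrite Hmod. apply Hlarge. lra.
Qed.
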